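(* Consider the MPG algorithm described in the context, and suppose that Assumption (A1) holds and that for each $j=1,\ldots,m$ the gradient $\nabla G_j$ is Lipschitz continuous with constant $L_j>0$. Then, for a given tolerance $\varepsilon>0$, the MPG algorithm generates a point $x^k$ such that $|\theta_\alpha(x^k)|\le\varepsilon$ in at most $\mathcal{O}(1/\varepsilon)$ iterations (that is, there is a constant $C>0$, independent of $\varepsilon$, such that some iterate $x^k$ with $k\le C/\varepsilon$ satisfies $|\theta_\alpha(x^k)|\le\varepsilon$).
   Context: Let $F:\mathbb{R}^n\to(\mathbb{R}\cup\{+\infty\})^m$, $F=(F_1,\ldots,F_m)$, with $F_j=G_j+H_j$ for $j=1,\ldots,m$, where: (i) each $G_j:\mathbb{R}^n\to\mathbb{R}$ is continuously differentiable and convex; (ii) each $H_j:\mathbb{R}^n\to\mathbb{R}\cup\{+\infty\}$ is proper, convex and continuous on its domain; (iii) $\mathrm{dom}(F):=\{x: F_j(x)<+\infty\ \forall j\}$ is nonempty and closed. For $u,v\in\mathbb{R}^m$, $u\preceq v$ means $u_j\le v_j$ for all $j$. Assumption (A1): for every sequence $\{y^k\}\subset\mathrm{dom}(F)$ with $F(y^{k+1})\preceq F(y^k)$ for all $k$, there exists $y\in\mathrm{dom}(F)$ with $F(y)\preceq F(y^k)$ for all $k$. For $x\in\mathrm{dom}(F)$ and $\alpha>0$ define $\psi_x(u):=\max_{j=1,\ldots,m}\big(\nabla G_j(x)^\top(u-x)+H_j(u)-H_j(x)\big)$, $p_\alpha(x):=\arg\min_{u\in\mathbb{R}^n}\psi_x(u)+\frac{1}{2\alpha}\|u-x\|^2$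 (unique minimizer), and $\theta_\alpha(x):=\psi_x(p_\alpha(x))+\frac{1}{2\alpha}\|p_\alpha(x)-x\|^2$ (one has $\theta_\alpha\le 0$, with equality exactly at weakly Pareto optimal points). MPG algorithm. Step 0: choose $x^0\in\mathrm{dom}(F)$, $\alpha>0$, $\gamma\in(0,2/\alpha)$, $0<\tau_1<\tau_2<1$; set $k=0$. Step 1: compute $p^k:=p_\alpha(x^k)$ and $\theta_\alpha(x^k)$. Step 2: if $\theta_\alpha(x^k)=0$, stop. Step 3: set $d^k:=p^k-x^k$, take $j_k^*\in\arg\max_{j}\nabla G_j(x^k)^\top d^k$, set $t=1$. Step 3.1: if $G_{j_k^*}(x^k+td^k)\le G_{j_k^*}(x^k)+t\nabla G_{j_k^*}(x^k)^\top d^k+t\frac{\gamma}{2}\|d^k\|^2$, go to Step 3.2; otherwise replace $t$ by some value in $[\tau_1 t,\tau_2 t]$ and repeat Step 3.1. Step 3.2: if $F(x^k+td^k)\preceq F(x^k)$, set $t_k=t$ and go to Step 4. Step 3.3: replace $t$ by some value in $[\tau_1 t,\tau_2 t]$; if $G_j(x^k+td^k)\le G_j(x^k)+t\nabla G_j(x^k)^\top d^k+t\frac{\gamma}{2}\|d^k\|^2$ for all $j=1,\ldots,m$, set $t_k=t$ and go to Step 4; otherwise repeat Step 3.3. Step 4: $x^{k+1}:=x^k+t_kd^k$, $k\leftarrow k+1$, go to Step 1. *)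

From HB Require Import structures.
From mathcomp Require Import all_boot all_order all_algebra.
From mathcomp Require Import all_classical all_reals all_analysis.
Set Implicit Arguments. Unset Strict Implicit. Unset Printing Implicit Defensive.
Import Order.TTheory GRing.Theory Num.Theory.
Import numFieldNormedType.Exports.
Local Open Scope ring_scope.
Local Open Scope classical_set_scope.

Section MPG.
Variables (R : realType) (n m : nat).
Notation vec := 'rV[R]_n.

Definition dot (u v : vec) : R := \sum_(i < n) u 0 i * v 0 i.
Definition enorm2 (u : vec) : R := dot u u.
Definition enorm (u : vec) : R := Num.sqrt (enorm2 u).

Definition convex_real (f : vec -> R) : Prop :=
  forall x y (t : R), 0 <= t <= 1 ->
    f (t *: x + (1 - t) *: y) <= t * f x + (1 - t) * f y.

Definition convex_ext (f : vec -> \bar R) : Prop :=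
  forall x y (t : R), 0 <= t <= 1 -> (f x < +oo)%E -> (f y < +oo)%E ->
    (f (t *: x + (1 - t) *: y)%R <= t%:E * f x + (1 - t)%:E * f y)%E.

(* effective domain of F = (G_j + H_j)_j  (G_j is finite everywhere) *)
Definition domF (H : 'I_m -> vec -> \bar R) : set vec :=
  [set x | forall j, (H j x < +oo)%E].

Definition Fval (G : 'I_m -> vec -> R) (H : 'I_m -> vec -> \bar R)
  (j : 'I_m) (x : vec) : \bar R := ((G j x)%:E + H j x)%E.

Definition Fle (G : 'I_m -> vec -> R) (H : 'I_m -> vec -> \bar R)
  (y x : vec) : Prop := forall j, (Fval G H j y <= Fval G H j x)%E.

Definition psi (gradG : 'I_m -> vec -> vec) (H : 'I_m -> vec -> \bar R)
  (x u : vec) : \bar R :=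
  (\big[maxe/-oo]_(j < m) ((dot (gradG j x) (u - x)%R)%:E + (H j u - H j x)))%E.

Definition phi (alpha : R) gradG H (x u : vec) : \bar R :=
  (psi gradG H x u + ((2 * alpha)^-1 * enorm2 (u - x))%R%:E)%E.

Definition is_palpha (alpha : R) gradG H (x p : vec) : Prop :=
  forall u, (phi alpha gradG H x p <= phi alpha gradG H x u)%E.

Definition theta (alpha : R) gradG H (x : vec) : \bar R :=
  ereal_inf (range (phi alpha gradG H x)).

Definition descent_cond (gamma : R) (G : 'I_m -> vec -> R) gradG
  (x d : vec) (j : 'I_m) (t : R) : Prop :=
  G j (x + t *: d) <= G j x + t * dot (gradG j x) d + t * (gamma / 2) * enorm2 d.

(* One iteration (Steps 1-4) of MPG from x (with theta_alpha(x) <> 0) to x'.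
   s is the sequence of trial step sizes: s 0 = 1 and each replacement picks
   a value in [tau1 t, tau2 t].  N1 is the exit of Step 3.1; then either
   Step 3.2 accepts s N1, or Step 3.3 accepts the first s N2 (N2 > N1)
   satisfying the descent condition for all j. *)
Definition mpg_step (alpha gamma tau1 tau2 : R) (G : 'I_m -> vec -> R)
  (gradG : 'I_m -> vec -> vec) (H : 'I_m -> vec -> \bar R) (x x' : vec) : Prop :=
  exists (p : vec) (jstar : 'I_m) (s : nat -> R) (N1 : nat) (tk : R),
    is_palpha alpha gradG H x p /\
    let d := p - x in
    (forall j, dot (gradG j x) d <= dot (gradG jstar x) d) /\
    s 0%N = 1 /\
    (forall i, tau1 * s i <= s i.+1 <= tau2 * s i) /\
    descent_cond gamma G gradG x d jstar (s N1) /\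
    (forall i, (i < N1)%N -> ~ descent_cond gamma G gradG x d jstar (s i)) /\
    ((Fle G H (x + s N1 *: d) x /\ tk = s N1) \/
     (~ Fle G H (x + s N1 *: d) x /\
      exists N2, (N1 < N2)%N /\
        (forall j, descent_cond gamma G gradG x d j (s N2)) /\
        (forall i, (N1 < i < N2)%N ->
           ~ (forall j, descent_cond gamma G gradG x d j (s i))) /\
        tk = s N2)) /\
    x' = x + tk *: d.

Definition mpg_run (alpha gamma tau1 tau2 : R) G gradG H (x : nat -> vec) : Prop :=
  forall k, theta alpha gradG H (x k) <> 0%E ->
    mpg_step alpha gamma tau1 tau2 G gradG H (x k) (x k.+1).

End MPG.

From HB Require Import structures.
From mathcomp Require Import all_boot all_order all_algebra.
From mathcomp Require Import all_classical all_reals all_analysis.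
From mathcomp Require Import ring lra.
Import Order.TTheory GRing.Theory Num.Theory.
Import numFieldNormedType.Exports.
Set Implicit Arguments. Unset Strict Implicit. Unset Printing Implicit Defensive.
Local Open Scope ring_scope.
Local Open Scope classical_set_scope.

(* Steps 3.1-3.3 accept every step below gamma / (2 sum_j L_j) (descent lemma), so the
   accepted step is at least tmin = tau1^2 min(1, gamma / (2 sum_j L_j)). Comparing
   p_alpha(x) with the points of the segment [x, p_alpha(x)] gives
   psi_x(p_alpha(x)) + gamma/2 |p_alpha(x) - x|^2 <= (1 - gamma alpha / 2) theta_alpha(x),
   so one iteration decreases every F_j and some F_j by kappa |theta_alpha(x)|, with
   kappa = tmin (1 - gamma alpha / 2). By (A1) the sum of the F_j stays bounded below
   along the iterates, hence sum_k |theta_alpha(x^k)| <= D and at most D / eps of the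
   first iterates can have |theta_alpha| > eps. *)

Section EuclideanSpace.
Variables (R : realType) (n : nat).
Implicit Types (u v w : 'rV[R]_n).

Lemma dotC u v : dot u v = dot v u.
Proof. by apply: eq_bigr => i _; rewrite mulrC. Qed.

Lemma dotDl u v w : dot (u + v) w = dot u w + dot v w.
Proof. by rewrite /dot -big_split; apply: eq_bigr => i _; rewrite mxE mulrDl. Qed.

Lemma dotZl (a : R) u w : dot (a *: u) w = a * dot u w.
Proof. by rewrite /dot mulr_sumr; apply: eq_bigr => i _; rewrite mxE mulrA. Qed.

Lemma dotZr (a : R) u w : dot u (a *: w) = a * dot u w.
Proof. by rewrite dotC dotZl dotC. Qed.

Lemma dotBl u v w : dot (u - v) w = dot u w - dot v w.
Proof. by rewrite dotDl -scaleN1r dotZl mulN1r. Qed.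

Lemma dotr0 u : dot u 0 = 0.
Proof. by rewrite -(scale0r 0) dotZr mul0r. Qed.

Lemma enorm2_ge0 u : 0 <= enorm2 u.
Proof. by apply: sumr_ge0 => i _; rewrite -expr2 sqr_ge0. Qed.

Lemma enorm2Z (a : R) u : enorm2 (a *: u) = a ^+ 2 * enorm2 u.
Proof. by rewrite /enorm2 dotZl dotZr mulrA expr2. Qed.

Lemma enormZ (a : R) u : enorm (a *: u) = `|a| * enorm u.
Proof. by rewrite /enorm enorm2Z sqrtrM ?sqr_ge0 // sqrtr_sqr. Qed.

Lemma sqr_enorm u : enorm u ^+ 2 = enorm2 u.
Proof. by rewrite sqr_sqrtr // enorm2_ge0. Qed.

(* Lagrange's identity: the defect is half the sum of the squared 2x2 minors. *)
Lemma sqr_dot_le u v : dot u v ^+ 2 <= enorm2 u * enorm2 v.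
Proof.
have minors_ge0 : 0 <= \sum_i \sum_j (u 0 i * v 0 j - u 0 j * v 0 i) ^+ 2.
  by do 2!apply: sumr_ge0 => ? _; rewrite sqr_ge0.
suff E : \sum_i \sum_j (u 0 i * v 0 j - u 0 j * v 0 i) ^+ 2 =
          2 * (enorm2 u * enorm2 v - dot u v ^+ 2).
  by rewrite E pmulr_rge0 // subr_ge0 in minors_ge0.
rewrite /enorm2 /dot expr2 !big_distrlr /= mulr_natl mulr2n.
rewrite [in X in _ = _ + (X - _)]exchange_big /= -!sumrB -big_split.
apply: eq_bigr => i _; rewrite -!sumrB -big_split; apply: eq_bigr => j _ /=; ring.
Qed.

Lemma dot_le_enorm u v : dot u v <= enorm u * enorm v.
Proof.
rewrite /enorm -sqrtrM ?enorm2_ge0 //; apply: le_trans (ler_norm _) _.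
by rewrite -sqrtr_sqr ler_sqrt ?mulr_ge0 ?enorm2_ge0 ?sqr_dot_le.
Qed.

End EuclideanSpace.

Lemma convex_gradient_le (R : realType) (n : nat) (g : 'rV[R]_n -> R) (gr : 'rV[R]_n) y z :
  convex_real g -> differentiable g y -> (forall h, 'd g y h = dot gr h) ->
  g y + dot gr (z - y) <= g z.
Proof.
move=> g_cvx g_diff dgE; set h := z - y.
suff : 'D_h g y <= g z - g y by rewrite deriveE // dgE lerBrDl addrC.
have g_der : derivable g y h by exact: diff_derivable.
apply: (cvgr_to_le (cvg_dnbhs_at_right g_der)).
near=> s; have s_gt0 : 0 < s by near: s; exact: nbhs_right_gt.
have s_lt1 : s < 1 by near: s; exact: nbhs_right_lt.
rewrite /= ler_pdivrMl //.
have -> : s *: h + y = s *: z + (1 - s) *: y.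
  by rewrite /h scalerBr scalerBl scale1r addrA addrAC.
have := g_cvx z y s; rewrite (ltW s_gt0) (ltW s_lt1) => /(_ isT); lra.
Unshelve. all: by end_near.
Qed.

(* Only the gradient inequality at [y = x + t d] is needed:
   G(y) <= G(x) + t <grad G(y), d> <= G(x) + t <grad G(x), d> + L t^2 |d|^2. *)
Lemma descent_cond_small_step (R : realType) (n m : nat) (G : 'I_m -> 'rV[R]_n -> R)
    (gradG : 'I_m -> 'rV[R]_n -> 'rV[R]_n) (L gamma t : R) j x d :
  (forall y, differentiable (G j) y /\ forall h, 'd (G j) y h = dot (gradG j y) h) ->
  convex_real (G j) ->
  (forall y z, enorm (gradG j y - gradG j z) <= L * enorm (y - z)) ->
  0 <= t -> t * L <= gamma / 2 -> descent_cond gamma G gradG x d j t.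
Proof.
move=> G_diff G_cvx G_lip t_ge0 tL_le; set y := x + t *: d.
have yx : y - x = t *: d by rewrite /y addrC addKr.
have := convex_gradient_le x G_cvx (proj1 (G_diff y)) (proj2 (G_diff y)).
rewrite -opprB yx -scaleNr dotZr => G_le.
have grad_incr : dot (gradG j y) d - dot (gradG j x) d <= L * t * enorm2 d.
  rewrite -dotBl; apply: le_trans (dot_le_enorm _ _) _.
  rewrite -sqr_enorm expr2 mulrA ler_wpM2r ?sqrtr_ge0 //.
  by have := G_lip y x; rewrite yx enormZ ger0_norm // mulrA.
rewrite /descent_cond -/y.
have : t * (L * t * enorm2 d) <= t * (gamma / 2) * enorm2 d.
  have := mulr_ge0 t_ge0 (enorm2_ge0 d); nra.
nra.
Qed.

Lemma domF_fin_num (R : realType) (n m : nat) (H : 'I_m -> 'rV[R]_n -> \bar R) y j :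
  (forall j y, H j y != -oo%E) -> domF H y -> H j y \is a fin_num.
Proof. by move=> H_ninfty y_dom; rewrite fin_numE H_ninfty -ltey y_dom. Qed.

Lemma convex_ext_segment_le (R : realType) (n : nat) (h : 'rV[R]_n -> \bar R) x y (t : R) :
  convex_ext h -> h x \is a fin_num -> h y \is a fin_num -> 0 <= t <= 1 ->
  (h (x + t *: (y - x))%R <= (fine (h x) + t * (fine (h y) - fine (h x)))%:E)%E.
Proof.
move=> h_cvx hx hy t01.
have -> : x + t *: (y - x) = t *: y + (1 - t) *: x.
  by rewrite scalerBr scalerBl scale1r addrCA addrA.
move: (h_cvx y x t t01); case: (h x) hx => // a _; case: (h y) hy => // b _.
move=> /(_ (ltry _) (ltry _)) /le_trans; apply.
by rewrite -!EFinM -EFinD lee_fin /=; lra.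
Qed.

Section ProximalSubproblem.
Variables (R : realType) (n m : nat) (gradG : 'I_m -> 'rV[R]_n -> 'rV[R]_n).
Variables (H : 'I_m -> 'rV[R]_n -> \bar R) (alpha : R) (x p : 'rV[R]_n).
Hypotheses (m_gt0 : (0 < m)%N) (H_ninfty : forall j y, H j y != -oo%E).
Hypotheses (H_cvx : forall j, convex_ext (H j)) (alpha_gt0 : 0 < alpha).
Hypotheses (x_dom : domF H x) (p_min : is_palpha alpha gradG H x p).

Local Notation psi := (psi gradG H).
Local Notation phi := (phi alpha gradG H).

Let fin_x j : H j x \is a fin_num := domF_fin_num j H_ninfty x_dom.

Lemma phi_palpha_le0 : (phi x p <= 0)%E.
Proof.
apply: le_trans (p_min x) _; rewrite /phi subrr /enorm2 dotr0 mulr0 adde0.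
apply: bigmax_le => // j _.
by rewrite subrr dotr0 subee ?adde0.
Qed.

Lemma palpha_dom : domF H p.
Proof.
move=> j; rewrite ltey; apply/eqP => Hp_infty.
have : psi x p = +oo%E.
  apply/eqP; rewrite -leye_eq; apply: le_trans (le_bigmax _ _ j).
  by rewrite Hp_infty -(fineK (fin_x j)).
by move=> psi_infty; move: phi_palpha_le0; rewrite /phi psi_infty.
Qed.

Let fin_p j : H j p \is a fin_num := domF_fin_num j H_ninfty palpha_dom.

Lemma psi_domE u : domF H u ->
  psi x u = (\big[maxe/-oo]_j (dot (gradG j x) (u - x) + (fine (H j u) - fine (H j x)))%:E)%E.
Proof.
move=> u_dom; apply: eq_bigr => j _.
by rewrite -(fineK (fin_x j)) -(fineK (domF_fin_num j H_ninfty u_dom)).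
Qed.

Lemma psi_palpha_fin_num : psi x p \is a fin_num.
Proof.
rewrite fin_numE; apply/andP; split.
  rewrite -ltNye (psi_domE palpha_dom).
  exact: lt_le_trans (ltNyr _) (le_bigmax _ _ (Ordinal m_gt0)).
by apply/negP => /eqP psi_infty; move: phi_palpha_le0; rewrite /phi psi_infty.
Qed.

Let Psi := fine (psi x p).
Let Q := (2 * alpha)^-1 * enorm2 (p - x).

Lemma psi_palpha_term_le j : dot (gradG j x) (p - x) + (fine (H j p) - fine (H j x)) <= Psi.
Proof.
by rewrite -lee_fin fineK ?psi_palpha_fin_num // (psi_domE palpha_dom) (le_bigmax _ _ j).
Qed.

Lemma phi_palphaE : phi x p = (Psi + Q)%:E.
Proof. by rewrite /phi -(fineK psi_palpha_fin_num). Qed.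

Lemma theta_palphaE : theta alpha gradG H x = (Psi + Q)%:E.
Proof.
rewrite -phi_palphaE; apply/le_anti/andP; split; first by apply: ereal_inf_lbound; exists p.
by apply/ereal_infP => _ [u _ <-]; exact: p_min.
Qed.

Lemma palpha_segment_dom (t : R) : 0 <= t <= 1 -> domF H (x + t *: (p - x)).
Proof.
move=> t01 j; apply: (le_lt_trans _ (ltry _)).
exact: (convex_ext_segment_le (@H_cvx j) (fin_x j) (fin_p j) t01).
Qed.

Lemma H_palpha_segment_le (t : R) j : 0 <= t <= 1 ->
  fine (H j (x + t *: (p - x))) <= fine (H j x) + t * (fine (H j p) - fine (H j x)).
Proof.
move=> t01; rewrite -lee_fin fineK.
  exact: (convex_ext_segment_le (@H_cvx j) (fin_x j) (fin_p j) t01).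
exact: domF_fin_num (palpha_segment_dom t01).
Qed.

Lemma psi_palpha_segment_le (t : R) : 0 <= t <= 1 ->
  (psi x (x + t *: (p - x)) <= (t * Psi)%:E)%E.
Proof.
move=> t01; rewrite (psi_domE (palpha_segment_dom t01)).
apply: bigmax_le => [|j _]; first exact: leNye.
rewrite lee_fin addrAC subrr add0r dotZr.
have := H_palpha_segment_le j t01.
have := ler_wpM2l (proj1 (andP t01)) (psi_palpha_term_le j); lra.
Qed.

Lemma palpha_optimality (t : R) : 0 <= t < 1 -> Psi + (1 + t) * Q <= 0.
Proof.
move=> /andP[t_ge0 t_lt1].
have := p_min (x + t *: (p - x)); rewrite phi_palphaE /phi addrAC subrr add0r enorm2Z.
have t01 : 0 <= t <= 1 by rewrite t_ge0 ltW.
move=> /le_trans /(_ (leeD2r _ (psi_palpha_segment_le t01))); rewrite -EFinD lee_fin.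
rewrite mulrCA -/Q => opt.
have : (1 - t) * (Psi + (1 + t) * Q) <= 0 by nra.
by rewrite pmulr_rle0 // subr_gt0.
Qed.

Lemma psi_palpha_le_theta (gamma : R) : 0 <= gamma -> gamma * alpha < 2 ->
  Psi + gamma / 2 * enorm2 (p - x) <= (1 - gamma * alpha / 2) * (Psi + Q).
Proof.
move=> gamma_ge0 gamma_lt; set s := gamma * alpha / 2.
have s01 : 0 <= s < 1.
  by rewrite /s divr_ge0 ?mulr_ge0 ?(ltW alpha_gt0) //= ltr_pdivrMr // mul1r.
have opt := palpha_optimality s01.
have Q_ge0 : 0 <= Q by rewrite mulr_ge0 ?enorm2_ge0 // invr_ge0 mulr_ge0 // ltW.
have -> : gamma / 2 * enorm2 (p - x) = 2 * s * Q by rewrite /s /Q; field; rewrite gt_eqF.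
case/andP: s01 => s_ge0 _.
have : 0 <= s * - (Psi + (1 + s) * Q) by rewrite mulr_ge0 // oppr_ge0.
have : 0 <= (1 - s) ^+ 2 * Q by rewrite mulr_ge0 ?sqr_ge0.
nra.
Qed.

Lemma theta_palpha_fin_num : theta alpha gradG H x \is a fin_num.
Proof. by rewrite theta_palphaE. Qed.

Lemma theta_palpha_le0 : fine (theta alpha gradG H x) <= 0.
Proof.
by rewrite theta_palphaE /=; have := @palpha_optimality 0; rewrite addr0 mul1r lexx ltr01; apply.
Qed.

Lemma Fval_palpha_segment_le (G : 'I_m -> 'rV[R]_n -> R) (gamma t : R) j :
  0 <= gamma -> gamma * alpha < 2 -> 0 <= t <= 1 ->
  descent_cond gamma G gradG x (p - x) j t ->
  (Fval G H j (x + t *: (p - x)) <=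
   Fval G H j x + (t * (1 - gamma * alpha / 2) * fine (theta alpha gradG H x))%:E)%E.
Proof.
move=> gamma_ge0 gamma_lt t01 G_desc.
rewrite /Fval -(fineK (fin_x j)) -(fineK (domF_fin_num j H_ninfty (palpha_segment_dom t01))).
rewrite theta_palphaE /= -!EFinD lee_fin.
have t_ge0 := proj1 (andP t01).
have := ler_wpM2l t_ge0 (psi_palpha_term_le j).
have := ler_wpM2l t_ge0 (psi_palpha_le_theta gamma_ge0 gamma_lt).
have := H_palpha_segment_le j t01; move: G_desc; rewrite /descent_cond; lra.
Qed.

End ProximalSubproblem.

Section Backtracking.
Variables (R : realType) (tau1 tau2 : R) (s : nat -> R).
Hypotheses (tau1_gt0 : 0 < tau1) (tau1_lt_tau2 : tau1 < tau2) (tau2_lt1 : tau2 < 1).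
Hypotheses (s0 : s 0%N = 1) (s_step : forall i, tau1 * s i <= s i.+1 <= tau2 * s i).

Lemma backtrack_gt0 i : 0 < s i.
Proof.
elim: i => [|i IH]; first by rewrite s0.
by apply: lt_le_trans (proj1 (andP (s_step i))); rewrite mulr_gt0.
Qed.

Lemma backtrack_le1 i : s i <= 1.
Proof.
elim: i => [|i IH]; first by rewrite s0.
apply: le_trans (proj2 (andP (s_step i))) (le_trans _ IH).
by rewrite ler_piMl ?ltW ?backtrack_gt0.
Qed.

(* A rejected trial step exceeds [T], hence the next one is at least [tau1 * T]. *)
Lemma backtrack_ge (accept : R -> Prop) (T b : R) N0 N :
  (forall t, 0 <= t <= T -> accept t) -> b <= T -> b <= s N0 -> (N0 <= N)%N ->
  (forall i, (N0 < i < N)%N -> ~ accept (s i)) -> tau1 * b <= s N.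
Proof.
move=> accept_small bT b_le N0N rejected.
have s_ge i : (N0 <= i < N)%N -> b <= s i.
  case/andP; rewrite leq_eqVlt => /orP[/eqP <- //|N0i iN].
  rewrite leNgt; apply/negP => siT; apply: (rejected i); first by rewrite N0i.
  by apply: accept_small; rewrite ltW ?backtrack_gt0 //= (le_trans (ltW siT)).
have tau1_le1 : tau1 <= 1 by rewrite ltW // (lt_trans tau1_lt_tau2).
move: N0N rejected s_ge; rewrite leq_eqVlt => /orP[/eqP <- _ _|].
  apply: le_trans (ler_wpM2l (ltW tau1_gt0) b_le) _.
  exact: ler_piMl (ltW (backtrack_gt0 N0)) tau1_le1.
case: N => // i N0i _ s_ge; have := s_ge i; rewrite -ltnS N0i ltnSn => /(_ isT).
move=> /(ler_wpM2l (ltW tau1_gt0)) sb; apply: le_trans sb _.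
by case/andP: (s_step i).
Qed.

End Backtracking.

Section MPGIteration.
Variables (R : realType) (n m : nat) (G : 'I_m -> 'rV[R]_n -> R).
Variables (gradG : 'I_m -> 'rV[R]_n -> 'rV[R]_n) (H : 'I_m -> 'rV[R]_n -> \bar R).
Variables (L : 'I_m -> R) (alpha gamma tau1 tau2 : R).
Hypotheses (m_gt0 : (0 < m)%N)
  (G_diff : forall j y, differentiable (G j) y /\ forall h, 'd (G j) y h = dot (gradG j y) h)
  (G_cvx : forall j, convex_real (G j)) (H_ninfty : forall j y, H j y != -oo%E)
  (H_cvx : forall j, convex_ext (H j)) (L_gt0 : forall j, 0 < L j)
  (gradG_lip : forall j y z, enorm (gradG j y - gradG j z) <= L j * enorm (y - z))
  (alpha_gt0 : 0 < alpha) (gamma_gt0 : 0 < gamma) (gamma_lt : gamma < 2 / alpha)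
  (tau1_gt0 : 0 < tau1) (tau1_lt_tau2 : tau1 < tau2) (tau2_lt1 : tau2 < 1).

Let T := gamma / (2 * \sum_j L j).
(* [tau1 ^+ 2]: the trial step may fall below the threshold [T] once in Step 3.1
   and once more in Step 3.3. *)
Let tmin := tau1 ^+ 2 * Num.min 1 T.

Lemma sumL_gt0 : 0 < \sum_j L j.
Proof.
rewrite (bigD1 (Ordinal m_gt0)) //= ltr_pwDl ?L_gt0 // sumr_ge0 // => j _.
exact: ltW.
Qed.

Lemma threshold_gt0 : 0 < T.
Proof. by rewrite divr_gt0 // mulr_gt0 ?sumL_gt0. Qed.

Lemma descent_cond_le_T x d j (t : R) : 0 <= t <= T -> descent_cond gamma G gradG x d j t.
Proof.
case/andP=> t_ge0 tT; apply: (descent_cond_small_step x d (G_diff j) _ (gradG_lip j) t_ge0) => //.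
have L_le : L j <= \sum_i L i by rewrite (bigD1 j) //= lerDl sumr_ge0 // => i _; exact: ltW.
apply: le_trans (ler_pM t_ge0 (ltW (L_gt0 j)) tT L_le) _.
by rewrite /T mulrAC -mulf_div divff ?mulr1 // gt_eqF ?sumL_gt0.
Qed.

Lemma mpg_step_line_search x x' : mpg_step alpha gamma tau1 tau2 G gradG H x x' ->
  exists p t, [/\ is_palpha alpha gradG H x p, x' = x + t *: (p - x), tmin <= t <= 1,
    (exists j, descent_cond gamma G gradG x (p - x) j t) &
    Fle G H x' x \/ forall j, descent_cond gamma G gradG x (p - x) j t].
Proof.
move=> [p [js [s [N1 [t [p_min /= [_ [s0 [s_step [desc_js [rejected1 [accepted ->]]]]]]]]]]]].
have T_gt0 := threshold_gt0.
have tau1_le1 : tau1 <= 1 by rewrite ltW // (lt_trans tau1_lt_tau2).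
have min_ge0 : 0 <= Num.min 1 T by rewrite le_min ler01 ltW.
have tau1_min : tau1 * Num.min 1 T <= Num.min 1 T by rewrite ler_piMl.
have accept_T := descent_cond_le_T x (p - x).
have bound1 : tau1 * Num.min 1 T <= s N1.
  apply: (backtrack_ge (N0 := 0%N) tau1_gt0 tau1_lt_tau2 tau2_lt1 s0 s_step (accept_T js)).
  - by rewrite ge_min lexx orbT.
  - by rewrite s0 ge_min lexx.
  - by [].
  - by move=> i /andP[_]; exact: rejected1.
have s_le1 := backtrack_le1 tau1_gt0 tau2_lt1 s0 s_step.
case: accepted => [[Fle_x' ->] | [_ [N2 [N12 [desc_all [rejected2 ->]]]]]].
  exists p, (s N1); split => //; [|by exists js|by left].
  rewrite s_le1 andbT; apply: le_trans _ bound1.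
  by rewrite /tmin expr2 -mulrA ler_piMl // mulr_ge0 // ltW.
exists p, (s N2); split => //; [|by exists js|by right].
rewrite s_le1 andbT /tmin expr2 -mulrA.
apply: (backtrack_ge (accept := fun u => forall j, descent_cond gamma G gradG x (p - x) j u)
    (T := T) tau1_gt0 tau1_lt_tau2 tau2_lt1 s0 s_step _ _ bound1 (ltnW N12) rejected2).
  by move=> u u_range j; exact: accept_T.
by apply: le_trans tau1_min _; rewrite ge_min lexx orbT.
Qed.

Lemma mpg_step_descent : exists2 kappa, 0 < kappa & forall x x', domF H x ->
  mpg_step alpha gamma tau1 tau2 G gradG H x x' ->
  [/\ theta alpha gradG H x \is a fin_num, fine (theta alpha gradG H x) <= 0,
      Fle G H x' x &
      exists j, (Fval G H j x' <= Fval G H j x + (kappa * fine (theta alpha gradG H x))%:E)%E].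
Proof.
have gamma_alpha : gamma * alpha < 2 by rewrite -ltr_pdivlMr.
have c_gt0 : 0 < 1 - gamma * alpha / 2 by rewrite subr_gt0 ltr_pdivrMr // mul1r.
have T_gt0 := threshold_gt0.
exists (tmin * (1 - gamma * alpha / 2)).
  by rewrite mulr_gt0 // mulr_gt0 ?exprn_gt0 // lt_min ltr01.
move=> x x' x_dom /mpg_step_line_search[p [t [p_min -> /andP[tmin_t t_le1] [j desc_j] accepted]]].
have min_gt0 : 0 < Num.min 1 T by rewrite lt_min ltr01.
have t_ge0 : 0 <= t by apply: le_trans _ tmin_t; rewrite mulr_ge0 ?exprn_ge0 ?ltW.
have t01 : 0 <= t <= 1 by rewrite t_ge0 t_le1.
have decrease k : descent_cond gamma G gradG x (p - x) k t ->
    (Fval G H k (x + t *: (p - x)) <=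
     Fval G H k x + (t * (1 - gamma * alpha / 2) * fine (theta alpha gradG H x))%:E)%E.
  exact: (Fval_palpha_segment_le m_gt0 H_ninfty H_cvx alpha_gt0 x_dom p_min
    (ltW gamma_gt0) gamma_alpha t01).
have th_le0 := theta_palpha_le0 m_gt0 H_ninfty H_cvx x_dom p_min.
split.
- exact: theta_palpha_fin_num m_gt0 H_ninfty x_dom p_min.
- exact: th_le0.
- case: accepted => // desc_all k; apply: le_trans (decrease k (desc_all k)) _.
  by apply: geeDl; rewrite lee_fin mulr_ge0_le0 // mulr_ge0 // ltW.
- exists j; apply: le_trans (decrease j desc_j) _; rewrite leeD2l // lee_fin.
  exact: ler_wnM2r th_le0 _ _ (ler_wpM2r (ltW c_gt0) tmin_t).
Qed.

End MPGIteration.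

Section Potential.
Variables (R : realType) (n m : nat) (G : 'I_m -> 'rV[R]_n -> R) (H : 'I_m -> 'rV[R]_n -> \bar R).
Hypothesis H_ninfty : forall j y, H j y != -oo%E.

Definition Fsum (y : 'rV[R]_n) : R := \sum_j fine (Fval G H j y).

Lemma Fval_fin_num j y : domF H y -> Fval G H j y \is a fin_num.
Proof. by move=> y_dom; rewrite fin_numD domF_fin_num. Qed.

Lemma domF_Fle y x : domF H x -> Fle G H y x -> domF H y.
Proof.
move=> x_dom y_le j; move: (y_le j) (domF_fin_num j H_ninfty x_dom); rewrite /Fval.
by case: (H j y) (H_ninfty j y) => [r _ _ _|_|//]; [exact: ltry | case: (H j x)].
Qed.

Lemma fine_Fval_le j y x : domF H y -> domF H x ->
  (Fval G H j y <= Fval G H j x)%E -> fine (Fval G H j y) <= fine (Fval G H j x).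
Proof. by move=> y_dom x_dom; apply: fine_le; exact: Fval_fin_num. Qed.

Lemma Fsum_le y x : domF H x -> Fle G H y x -> Fsum y <= Fsum x.
Proof.
move=> x_dom y_le; apply: ler_sum => j _.
exact: fine_Fval_le (domF_Fle x_dom y_le) x_dom (y_le j).
Qed.

Lemma Fsum_decrease y x j (delta : R) : domF H x -> Fle G H y x ->
  (Fval G H j y <= Fval G H j x + delta%:E)%E -> Fsum y <= Fsum x + delta.
Proof.
move=> x_dom y_le y_le_j; have y_dom := domF_Fle x_dom y_le.
rewrite /Fsum (bigD1 j) // [X in _ <= X + _](bigD1 j) //= addrAC lerD //.
  rewrite -(fineK (Fval_fin_num j x_dom)) -EFinD in y_le_j.
  by rewrite -lee_fin fineK ?Fval_fin_num.
by apply: ler_sum => i _; exact: fine_Fval_le y_dom x_dom (y_le i).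
Qed.

End Potential.

Fixpoint freeze (T : Type) (b : pred nat) (x : nat -> T) (k : nat) : T :=
  if k is k'.+1 then (if b k then x k else freeze b x k') else x 0%N.

Lemma freezeE (T : Type) (b : pred nat) (x : nat -> T) k : b k -> freeze b x k = x k.
Proof. by case: k => //= k ->. Qed.

Section SufficientDecrease.
Variables (R : realType) (n m : nat) (G : 'I_m -> 'rV[R]_n -> R).
Variables (H : 'I_m -> 'rV[R]_n -> \bar R) (crit : 'rV[R]_n -> \bar R).
Variables (kappa : R) (x : nat -> 'rV[R]_n).
Hypotheses (H_ninfty : forall j y, H j y != -oo%E) (kappa_gt0 : 0 < kappa).
Hypothesis A1 : forall y : nat -> 'rV[R]_n, (forall k, domF H (y k)) ->
  (forall k, Fle G H (y k.+1) (y k)) -> exists2 z, domF H z & forall k, Fle G H z (y k).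
Hypothesis x0_dom : domF H (x 0%N).
Hypothesis x_step : forall k, crit (x k) <> 0%E -> domF H (x k) ->
  [/\ crit (x k) \is a fin_num, fine (crit (x k)) <= 0, Fle G H (x k.+1) (x k) &
      exists j, (Fval G H j (x k.+1) <= Fval G H j (x k) + (kappa * fine (crit (x k)))%:E)%E].

Let active k := forall i, (i < k)%N -> crit (x i) <> 0%E.

Lemma active_dom k : active k -> domF H (x k).
Proof.
elim: k => // k IH act_k.
have act_k' : active k by move=> i /ltnW; exact: act_k.
by have [_ _ x_le _] := x_step (act_k k (ltnSn k)) (IH act_k'); exact: domF_Fle (IH act_k') x_le.
Qed.

(* (A1) only speaks of infinite nonincreasing sequences, while the iterates are only
   known to decrease while the method runs; so the sequence is frozen once it stops. *)
Lemma active_lower_bound : exists2 z, domF H z & forall k, active k -> Fle G H z (x k).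
Proof.
pose y := freeze (fun k => `[< active k >]) x.
have y_dom k : domF H (y k).
  elim: k => // k IH; rewrite /y /=; case: asboolP => // act; exact: active_dom.
have y_mono k : Fle G H (y k.+1) (y k).
  rewrite /y /=; case: asboolP => [act|_ j]; last exact: lexx.
  have act_k : active k by move=> i /ltnW; exact: act.
  rewrite freezeE; last exact/asboolP.
  by have [] := x_step (act k (ltnSn k)) (active_dom act_k).
have [z z_dom z_le] := A1 y_dom y_mono.
by exists z => // k act_k; move: (z_le k); rewrite /y freezeE //; exact/asboolP.
Qed.

Lemma active_sum_bound : exists D : R, forall K, active K ->
  \sum_(k < K) - fine (crit (x k)) <= D.
Proof.
have [z z_dom z_le] := active_lower_bound.
exists ((Fsum G H (x 0%N) - Fsum G H z) / kappa) => K act_K.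
rewrite ler_pdivlMr // mulrC.
have z_le_K : Fsum G H z <= Fsum G H (x K).
  exact: (Fsum_le H_ninfty (active_dom act_K) (z_le K act_K)).
suff : kappa * \sum_(k < K) - fine (crit (x k)) <= Fsum G H (x 0%N) - Fsum G H (x K) by lra.
elim: K act_K {z_le_K} => [|K IH] act_K; first by rewrite big_ord0 mulr0 subrr.
have act_K' : active K by move=> i /ltnW; exact: act_K.
have [_ _ x_le [j x_le_j]] := x_step (act_K K (ltnSn K)) (active_dom act_K').
have := Fsum_decrease H_ninfty (active_dom act_K') x_le x_le_j.
by rewrite big_ord_recr /= mulrDr mulrN; have := IH act_K'; lra.
Qed.

Lemma crit_count_bound : exists D : R, forall (eps : R) K, 0 < eps ->
  (forall k, (k < K)%N -> ~ (`|crit (x k)| <= eps%:E)%E) -> K%:R * eps <= D.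
Proof.
have [D D_bound] := active_sum_bound; exists D => eps K eps_gt0 large.
have act_K : active K.
  by move=> i iK crit0; apply: (large i iK); rewrite crit0 abse0 lee_fin ltW.
apply: le_trans (D_bound K act_K).
have -> : K%:R * eps = \sum_(k < K) eps by rewrite sumr_const card_ord mulr_natl.
apply: ler_sum => k _.
have act_k : active k by move=> i ik; apply: act_K; exact: ltn_trans ik (ltn_ord k).
have [crit_fin crit_le0 _ _] := x_step (act_K k (ltn_ord k)) (active_dom act_k).
have := large k (ltn_ord k); rewrite -(fineK crit_fin) /= lee_fin ler0_norm //.
by move/negP; rewrite -ltNge => /ltW.
Qed.

End SufficientDecrease.

Lemma count_bound_complexity (R : realType) (good : R -> nat -> Prop) (D : R) :
  (forall (eps : R) K, 0 < eps -> (forall k, (k < K)%N -> ~ good eps k) -> K%:R * eps <= D) ->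
  exists2 C : R, 0 < C & forall eps : R, 0 < eps -> exists k : nat, k%:R <= C / eps /\ good eps k.
Proof.
move=> count; have D_ge0 : 0 <= D by have := count 1 0%N ltr01; rewrite mul0r; apply.
exists (D + 1); first by rewrite ltr_wpDl.
move=> eps eps_gt0; set N := Num.truncn (D / eps).
have N_le : N%:R <= (D + 1) / eps.
  have : N%:R <= D / eps by rewrite truncn_le divr_ge0 // ltW.
  by move/le_trans; apply; rewrite ler_pM2r ?invr_gt0 // lerDl ler01.
apply: contrapT => none; suff : N.+1%:R <= D / eps by rewrite leNgt truncnS_gt.
rewrite ler_pdivlMr //; apply: count => // k kN good_k; apply: none.
by exists k; split => //; apply: le_trans N_le; rewrite ler_nat -ltnS.
Qed.

Theorem mainTheorem7 (R : realType) (n m : nat)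
  (G : 'I_m -> 'rV[R]_n -> R) (gradG : 'I_m -> 'rV[R]_n -> 'rV[R]_n)
  (H : 'I_m -> 'rV[R]_n -> \bar R) (L : 'I_m -> R)
  (alpha gamma tau1 tau2 : R) (x : nat -> 'rV[R]_n) :
  (0 < m)%N ->
  (* (i) G_j continuously differentiable (with gradient gradG j) and convex *)
  (forall j y, differentiable (G j) y /\
     forall h, 'd (G j) y h = dot (gradG j y) h) ->
  (forall j, continuous (gradG j)) ->
  (forall j, convex_real (G j)) ->
  (* (ii) H_j proper, convex, continuous on its domain *)
  (forall j y, H j y != -oo%E) ->
  (forall j, exists y, (H j y < +oo)%E) ->
  (forall j, convex_ext (H j)) ->
  (forall j, {within [set y | (H j y < +oo)%E], continuous (H j)}) ->
  (* (iii) dom F nonempty and closed *)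
  domF H !=set0 ->
  closed (domF H) ->
  (* Assumption (A1) *)
  (forall y : nat -> 'rV[R]_n, (forall k, domF H (y k)) ->
     (forall k, Fle G H (y k.+1) (y k)) ->
     exists2 z, domF H z & forall k, Fle G H z (y k)) ->
  (* Lipschitz gradients *)
  (forall j, 0 < L j) ->
  (forall j y z, enorm (gradG j y - gradG j z) <= L j * enorm (y - z)) ->
  (* parameters of MPG and the generated sequence *)
  0 < alpha -> 0 < gamma -> gamma < 2 / alpha ->
  0 < tau1 -> tau1 < tau2 -> tau2 < 1 ->
  domF H (x 0%N) ->
  mpg_run alpha gamma tau1 tau2 G gradG H x ->
  exists2 C : R, 0 < C &
    forall eps : R, 0 < eps ->
      exists k : nat, k%:R <= C / eps /\ (`|theta alpha gradG H (x k)| <= eps%:E)%E.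
Proof.
(* Continuity, properness and closedness only guarantee that p_alpha exists; here
   its existence is part of the hypothesis [mpg_run]. *)
move=> m_gt0 G_diff _ G_cvx H_ninfty _ H_cvx _ _ _ A1 L_gt0 gradG_lip alpha_gt0 gamma_gt0
  gamma_lt tau1_gt0 tau1_lt_tau2 tau2_lt1 x0_dom run.
have [kappa kappa_gt0 step_descent] := mpg_step_descent m_gt0 G_diff G_cvx H_ninfty H_cvx
  L_gt0 gradG_lip alpha_gt0 gamma_gt0 gamma_lt tau1_gt0 tau1_lt_tau2 tau2_lt1.
have [D count] := crit_count_bound H_ninfty kappa_gt0 A1 x0_dom
  (fun k theta_nz x_dom => step_descent _ _ x_dom (run k theta_nz)).
exact: count_bound_complexity count.
Qed.
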